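(* Let $p,q \geq 1$ with $p+q \geq 3$, and let $M_x, M_y, M_z$ be three Minkowski patches in $\mathrm{Ein}^{p,q}$. If $M_x \cap M_z = M_y \cap M_z$, then $M_x = M_y$.
   Context: Let $\mathbb{R}^{p+1,q+1}$ be $\mathbb{R}^{p+q+2}$ with a nondegenerate symmetric bilinear form $B$ of signature $(p+1,q+1)$, and $\mathrm{Ein}^{p,q} \subset \mathbb{R}P^{p+q+1}$ the set of isotropic lines, with the conformal structure induced by $B$. For an isotropic vector $v$ with $x=[v]$, the Minkowski patch with vertex $x$ is $M_x = \{[w] \in \mathrm{Ein}^{p,q} : B(v,w) \neq 0\}$; it is an open dense subset conformally equivalent to $\mathbb{R}^{p,q}$. *)

From HB Require Import structures.
From mathcomp Require Import all_boot all_order all_algebra.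
Set Implicit Arguments. Unset Strict Implicit. Unset Printing Implicit Defensive.
Import Order.TTheory GRing.Theory Num.Theory.
Local Open Scope ring_scope.

Definition Jpq (R : realFieldType) (p q : nat) : 'M[R]_(p.+1 + q.+1) :=
  diag_mx (row_mx (const_mx 1) (const_mx (-1))).

(* S is the Gram matrix of a nondegenerate symmetric bilinear form of
   signature (p+1,q+1): it is congruent to Jpq. *)
Definition sig_form (R : realFieldType) (p q : nat) (S : 'M[R]_(p.+1 + q.+1)) : Prop :=
  exists P : 'M[R]_(p.+1 + q.+1), P \in unitmx /\ S = P^T *m Jpq R p q *m P.

Definition bform (R : realFieldType) (n : nat) (S : 'M[R]_n) (v w : 'rV[R]_n) : R :=
  (v *m S *m w^T) 0 0.

(* v is a nonzero isotropic vector, i.e. [v] is a point of Ein^{p,q}. *)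
Definition isotropic (R : realFieldType) (n : nat) (S : 'M[R]_n) (v : 'rV[R]_n) : Prop :=
  v != 0 /\ bform S v v = 0.

(* [w] lies in the Minkowski patch M_[v] (w a representative of a point of Ein). *)
Definition in_patch (R : realFieldType) (n : nat) (S : 'M[R]_n) (v w : 'rV[R]_n) : Prop :=
  isotropic S w /\ bform S v w != 0.

From HB Require Import structures.
From mathcomp Require Import all_boot all_order all_algebra.
From mathcomp Require Import ring lra zify.
Set Implicit Arguments. Unset Strict Implicit. Unset Printing Implicit Defensive.
Import Order.TTheory GRing.Theory Num.Theory.
Local Open Scope ring_scope.

(* Write [a^perp] for the [B]-orthogonal of [a]. Read contrapositively,
   [M_y ∩ M_z ⊆ M_x] says that every isotropic [w ⊥ x] with [B z w != 0] is
   orthogonal to [y]. Isotropic test vectors are enough, because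
   [v ↦ 2 B(c,v) v - B(v,v) c] sends any [v] with [B c v != 0] to an isotropic
   vector not orthogonal to an isotropic [c]. If [B z x != 0] this gives
   [x^perp ⊆ y^perp], so [y] lies on the line of [x] by nondegeneracy.
   If [B z x = 0] and [z] is off the line of [x], the quadratic form
   [v ↦ B(y, 2 B(z,v) v - B(v,v) z)] vanishes on [x^perp], hence so does its
   polarisation; pairing it with a [d ⊥ x] not orthogonal to [z], or with a
   vector orthogonal to [x], [y], [z] off the line of [x] (this is where
   dimension at least 5 is needed), again yields [x^perp ⊆ y^perp]. *)

Section BilinearForm.

Variables (R : realFieldType) (n : nat) (S : 'M[R]_n).
Local Notation B := (bform S).

Lemma bformDl u v w : B (u + v) w = B u w + B v w.
Proof. by rewrite /bform !mulmxDl mxE. Qed.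

Lemma bformDr u v w : B w (u + v) = B w u + B w v.
Proof. by rewrite /bform linearD /= mulmxDr mxE. Qed.

Lemma bformZl k u w : B (k *: u) w = k * B u w.
Proof. by rewrite /bform -!scalemxAl mxE. Qed.

Lemma bformZr k u w : B w (k *: u) = k * B w u.
Proof. by rewrite /bform linearZ /= -scalemxAr mxE. Qed.

Lemma bformNl u w : B (- u) w = - B u w.
Proof. by rewrite /bform !mulNmx mxE. Qed.

Lemma bformNr u w : B w (- u) = - B w u.
Proof. by rewrite /bform linearN /= mulmxN mxE. Qed.

Lemma bform0r w : B w 0 = 0.
Proof. by rewrite /bform linear0 mulmx0 mxE. Qed.

Lemma bform_trC u v : B u v = ((v *m (u *m S)^T) 0 0).
Proof. by rewrite /bform -[u *m S *m v^T]trmxK trmx_mul trmxK mxE. Qed.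

Hypothesis S_unit : S \in unitmx.

(* The columns of [cokermx (a *m S)] span [a^perp]; one of them detects [c]. *)
Lemma exists_perp_separator a c :
  ~~ (c <= a)%MS -> exists d, B a d = 0 /\ B c d != 0.
Proof.
have S_free : row_free S by rewrite row_free_unit.
rewrite -(submxMfree _ _ S_free) submxE.
set K := cokermx (a *m S) => cS_notin.
have aK : a *m S *m K = 0 by apply: mulmx_coker.
have /existsP[j cj] : [exists j, (c *m S *m K) 0 j != 0].
  apply: contraNT cS_notin; rewrite negb_exists => /forallP cj0.
  apply/eqP/matrixP => i j; rewrite (ord1 i) [RHS]mxE.
  by apply/eqP; move: (cj0 j); rewrite negbK.
exists (col j K)^T.
rewrite /bform trmxK colE mulmxA aK mul0mx mulmxA -colE.
by split; rewrite mxE.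
Qed.

Lemma sub_rV_of_perp a c : (forall v, B a v = 0 -> B c v = 0) -> (c <= a)%MS.
Proof.
move=> perp_ac; apply/negPn/negP => /exists_perp_separator[d [ad cd]].
by rewrite (perp_ac d ad) eqxx in cd.
Qed.

Lemma exists_perp3_notin_line a b c : (4 < n)%N ->
  exists u, [/\ B a u = 0, B b u = 0, B c u = 0 & ~~ (u <= a)%MS].
Proof.
move=> n_gt4.
set M := row_mx (a *m S)^T (row_mx (b *m S)^T (c *m S)^T).
set K := kermx M.
have rank_K : (1 < \rank K)%N by rewrite mxrank_ker; have := rank_leq_col M; lia.
have /existsP[i Ki] : [exists i, ~~ (row i K <= a)%MS].
  apply: contraLR rank_K; rewrite negb_exists -leqNgt => /forallP K_a.
  have /mxrankS : (K <= a)%MS by apply/row_subP => i; have := K_a i; rewrite negbK.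
  by have := rank_leq_row a; lia.
have : row i K *m M = 0 by rewrite -row_mul mulmx_ker row0.
rewrite !mul_mx_row => /eqP; rewrite !row_mx_eq0 => /and3P[/eqP Ka /eqP Kb /eqP Kc].
by exists (row i K); rewrite !bform_trC ?Ka ?Kb ?Kc ?mxE.
Qed.

Hypothesis S_sym : S^T = S.

Lemma bformC u v : B u v = B v u.
Proof. by rewrite bform_trC /bform trmx_mul S_sym mulmxA. Qed.

Definition bformE := (bformDl, bformDr, bformNl, bformNr, bformZl, bformZr).

Definition isolift c v := (2 * B c v) *: v - B v v *: c.

Lemma bform_isolift u c v : B u (isolift c v) = 2 * B c v * B u v - B v v * B u c.
Proof. by rewrite /isolift !bformE. Qed.

Lemma isoliftN c v : isolift c (- v) = isolift c v.
Proof. by rewrite /isolift !bformE mulrN scaleNr scalerN !opprK. Qed.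

Lemma isolift_nonperp c v : B c c = 0 -> B c v != 0 -> B c (isolift c v) != 0.
Proof.
move=> cc cv.
by rewrite bform_isolift cc mulr0 subr0 -mulrA mulf_neq0 ?pnatr_eq0 ?mulf_neq0.
Qed.

Lemma isotropic_isolift c v : B c c = 0 -> B c v != 0 -> isotropic S (isolift c v).
Proof.
move=> cc cv; have c_lift := isolift_nonperp cc cv.
split; first by apply: contraNneq c_lift => ->; rewrite bform0r.
rewrite {1}/isolift bformDl bformNl !bformZl !bform_isolift cc (bformC v c); ring.
Qed.

Lemma bform_isoliftD b c u v :
  B b (isolift c (u + v)) = B b (isolift c u) + B b (isolift c v)
    + 2 * (B c u * B b v + B c v * B b u - B u v * B b c).
Proof. by rewrite !bform_isolift !bformE (bformC v u); ring. Qed.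

Lemma sub_rV_of_isotropic_perp a b : B b b = 0 -> B a b = 0 ->
  (forall w, isotropic S w -> B a w = 0 -> B b w = 0) -> (b <= a)%MS.
Proof.
move=> bb ab perp_ab; apply: sub_rV_of_perp => v av.
apply/eqP; apply: contraT => bv.
have a_lift : B a (isolift b v) = 0 by rewrite bform_isolift av ab; ring.
have := isolift_nonperp bb bv.
by rewrite perp_ab ?eqxx //; apply: isotropic_isolift.
Qed.

Section PatchCondition.

Variables a b c : 'rV[R]_n.
Hypotheses (a_iso : isotropic S a) (b_iso : isotropic S b) (c_iso : isotropic S c).
(* The contrapositive form of [M_b ∩ M_c ⊆ M_a]. *)
Hypothesis patch_perp :
  forall w, isotropic S w -> B a w = 0 -> B c w != 0 -> B b w = 0.

Lemma patch_perp_sub_nonperp : B c a != 0 -> (b <= a)%MS.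
Proof.
have [[_ aa] [_ bb]] := (a_iso, b_iso).
move=> ca; have ba : B b a = 0 by apply: patch_perp.
apply: sub_rV_of_isotropic_perp => //; first by rewrite bformC.
move=> w [w0 ww] aw; have [/eqP cw | cw] := boolP (B c w == 0); last exact: patch_perp.
have cwa : B c (w + a) != 0 by rewrite bformDr cw add0r.
suff : B b (w + a) = 0 by rewrite bformDr ba addr0.
apply: patch_perp => //; last by rewrite bformDr aw aa addr0.
split; first by apply: contraNneq cwa => ->; rewrite bform0r.
by rewrite !bformE ww aa (bformC w a) aw; ring.
Qed.

Section PerpCase.

Hypotheses (ca : B c a = 0) (c_notin : ~~ (c <= a)%MS).

Lemma isolift_patch_perp v : B a v = 0 -> B b (isolift c v) = 0.
Proof.
have [[_ cc] ac] := (c_iso, etrans (bformC a c) ca).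
have lift_perp w : B a w = 0 -> B c w != 0 -> B b (isolift c w) = 0.
  move=> aw cw; apply: patch_perp; [exact: isotropic_isolift | | exact: isolift_nonperp].
  by rewrite bform_isolift aw ac; ring.
have [d [ad cd]] := exists_perp_separator c_notin.
move=> av; have [/eqP cv | cv] := boolP (B c v == 0); last exact: lift_perp.
(* For [v ⊥ c] use the parallelogram law on [v ± d], which are not orthogonal to [c]. *)
have Qvd : B b (isolift c (v + d)) = 0.
  by apply: lift_perp; rewrite bformDr ?av ?ad ?cv ?add0r.
have Qvnd : B b (isolift c (v + - d)) = 0.
  by apply: lift_perp; rewrite bformDr bformNr ?av ?ad ?cv ?add0r ?oppr0 ?oppr_eq0.
have := bform_isoliftD b c v d; have := bform_isoliftD b c v (- d).
rewrite isoliftN Qvd Qvnd (lift_perp d ad cd) !bformNr cv; lra.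
Qed.

Lemma polar_patch_perp u v : B a u = 0 -> B a v = 0 ->
  B c u * B b v + B c v * B b u = B u v * B b c.
Proof.
move=> au av; have := bform_isoliftD b c u v.
rewrite !isolift_patch_perp ?bformDr ?au ?av ?addr0 //; lra.
Qed.

Lemma patch_perp_sub_perp : (4 < n)%N -> (b <= a)%MS.
Proof.
move=> n_gt4; have [/eqP bc | bc] := boolP (B b c == 0).
  have [d [ad cd]] := exists_perp_separator c_notin.
  have bd : B b d = 0.
    have := polar_patch_perp ad ad; rewrite bc mulr0 => dd.
    have /eqP : B c d * B b d = 0 by lra.
    by rewrite mulf_eq0 (negbTE cd) => /eqP.
  apply: sub_rV_of_perp => v av; have := polar_patch_perp ad av.
  by rewrite bc bd !mulr0 addr0 => /eqP; rewrite mulf_eq0 (negbTE cd) => /eqP.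
have [u [au bu cu u_notin]] := exists_perp3_notin_line a b c n_gt4.
suff : (u <= a)%MS by rewrite (negbTE u_notin).
apply: sub_rV_of_perp => v av; have := polar_patch_perp au av.
rewrite bu cu !mul0r mulr0 addr0 => /esym/eqP.
by rewrite mulf_eq0 (negbTE bc) orbF => /eqP.
Qed.

End PerpCase.

Lemma patch_perp_sub : (4 < n)%N -> ~~ (c <= a)%MS -> (b <= a)%MS.
Proof.
move=> n_gt4 c_notin; have [/eqP ca | ca] := boolP (B c a == 0).
  exact: patch_perp_sub_perp.
exact: patch_perp_sub_nonperp.
Qed.

End PatchCondition.

End BilinearForm.

Lemma sub_rV_sym (F : fieldType) n (u v : 'rV[F]_n) :
  u != 0 -> (u <= v)%MS -> (v <= u)%MS.
Proof.
move=> u0 uv; have v0 : v != 0.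
  by apply: contraNneq u0 => v0; move: uv; rewrite v0 => /submx0null ->.
by rewrite -(mxrank_leqif_sup uv) !rank_rV u0 v0.
Qed.

Lemma in_patch_sub_rV (R : realFieldType) n {S : 'M[R]_n} x y :
  y != 0 -> (y <= x)%MS -> forall w, in_patch S x w <-> in_patch S y w.
Proof.
move=> y0 /sub_rVP[l yl] w; subst y.
have l0 : l != 0 by apply: contraNneq y0 => ->; rewrite scale0r.
by rewrite /in_patch bformZl mulf_eq0 (negbTE l0).
Qed.

Lemma patch_perp_of_inter_sub (R : realFieldType) n (S : 'M[R]_n) x y z :
  (forall w, in_patch S y w /\ in_patch S z w -> in_patch S x w) ->
  forall w, isotropic S w -> bform S x w = 0 -> bform S z w != 0 -> bform S y w = 0.
Proof.
move=> inter_sub w w_iso xw zw; apply/eqP; apply: contraT => yw.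
by have [_] := inter_sub w (conj (conj w_iso yw) (conj w_iso zw)); rewrite xw eqxx.
Qed.

Lemma sig_form_sym (R : realFieldType) p q (S : 'M[R]_(p.+1 + q.+1)) :
  sig_form S -> S^T = S.
Proof. by case=> P [_ ->]; rewrite !trmx_mul trmxK /Jpq tr_diag_mx mulmxA. Qed.

Lemma sig_form_unit (R : realFieldType) p q (S : 'M[R]_(p.+1 + q.+1)) :
  sig_form S -> S \in unitmx.
Proof.
case=> P [P_unit ->]; rewrite !unitmx_mul unitmx_tr P_unit andbT /=.
rewrite unitmxE det_diag unitfE; apply/prodf_neq0 => i _.
by rewrite mxE; case: splitP => j _; rewrite mxE ?oppr_eq0 oner_eq0.
Qed.

Theorem lemma2p3 (R : realFieldType) (p q : nat)
  (hp : (1 <= p)%N) (hq : (1 <= q)%N) (hpq : (3 <= p + q)%N)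
  (S : 'M[R]_(p.+1 + q.+1)) (hS : sig_form S)
  (x y z : 'rV[R]_(p.+1 + q.+1))
  (hx : isotropic S x) (hy : isotropic S y) (hz : isotropic S z) :
  (forall w, (in_patch S x w /\ in_patch S z w) <-> (in_patch S y w /\ in_patch S z w)) ->
  forall w, in_patch S x w <-> in_patch S y w.
Proof.
move=> patches_eq.
have [S_sym S_unit] := (sig_form_sym hS, sig_form_unit hS).
have n_gt4 : (4 < p.+1 + q.+1)%N by lia.
have [[x0 _] [y0 _] [z0 _]] := And3 hx hy hz.
have perp_xy := patch_perp_of_inter_sub (fun w yz => (proj2 (patches_eq w) yz).1).
have perp_yx := patch_perp_of_inter_sub (fun w xz => (proj1 (patches_eq w) xz).1).
suff [yx | xy] : (y <= x)%MS \/ (x <= y)%MS.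
- exact: in_patch_sub_rV y0 yx.
- by move=> w; rewrite (in_patch_sub_rV x0 xy).
have [zx | zx] := boolP (z <= x)%MS; last first.
  by left; apply: (patch_perp_sub S_unit S_sym hx hy hz perp_xy n_gt4 zx).
have [zy | zy] := boolP (z <= y)%MS; last first.
  by right; apply: (patch_perp_sub S_unit S_sym hy hx hz perp_yx n_gt4 zy).
by right; apply: submx_trans (sub_rV_sym z0 zx) zy.
Qed.
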